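(* Let $X$ be a Banach space over $\mathbb R$ and let $\sum_n x_n$ be a series in $X$ which is not unconditionally convergent. Let $\mathcal I$ be an ideal on $\mathbb N$ with the Baire property. Then the set $$B(\mathcal I):=\left\{t \in \{-1,1\}^{\mathbb N} \colon \sum_n t(n)x_n \text{ is } \mathcal I\text{-convergent}\right\}$$ is meager in $\{-1,1\}^{\mathbb N}$ (with the product topology).
   Context: $\mathbb N=\{1,2,\dots\}$. An ideal on $\mathbb N$ is a family $\mathcal I\subset\mathcal P(\mathbb N)$ closed under finite unions and subsets, with $\mathbb N\notin\mathcal I$ and containing all finite subsets of $\mathbb N$. Identifying subsets of $\mathbb N$ with their characteristic functions, $\mathcal I$ is regarded as a subset of the Cantor space $\{0,1\}^{\mathbb N}$ (product topology), and ''$\mathcal I$ has the Baire property'' refers to this subset. A sequence $(y_n)$ in a normed space is $\mathcal I$-convergent to $y$ if $\{n:\|y_n-y\|>\varepsilon\}\in\mathcal I$ for every $\varepsilon>0$; a series is $\mathcal I$-convergent if its sequence of partial sums is $\mathcal I$-convergent to some element. A series $\sum_n x_n$ is unconditionally convergent if $\sum_n x_{p(n)}$ converges for every permutation $p$ of $\mathbb N$. *)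

From HB Require Import structures.
From mathcomp Require Import all_boot all_order all_algebra.
From mathcomp Require Import all_classical all_reals.
From mathcomp Require Import topology normedtype sequences cantor.
Set Implicit Arguments. Unset Strict Implicit. Unset Printing Implicit Defensive.
Import Order.TTheory GRing.Theory Num.Theory.
Import numFieldNormedType.Exports.
Local Open Scope classical_set_scope.
Local Open Scope ring_scope.

(* Convention: the paper's N = {1,2,...} is represented by Rocq's nat via the
   shift k <-> k+1.  Index n : nat stands for the paper's index n+1. *)

Definition nowhere_dense {T : topologicalType} (A : set T) : Prop :=
  interior (closure A) = set0.

Definition meager {T : topologicalType} (A : set T) : Prop :=
  exists F : (set T)^nat, (forall n, nowhere_dense (F n)) /\ A `<=` \bigcup_n F n.

Definition baire_property {T : topologicalType} (A : set T) : Prop :=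
  exists U : set T, open U /\ meager ((A `\` U) `|` (U `\` A)).

Definition is_ideal (I : set (set nat)) : Prop :=
  [/\ forall A B, I A -> I B -> I (A `|` B),
      forall A B, B `<=` A -> I A -> I B,
      ~ I setT &
      forall A, finite_set A -> I A].

Definition ideal_in_cantor (I : set (set nat)) : set cantor_space :=
  [set f | I [set n | f n]].

Definition I_cvg_to {R : realType} {X : normedModType R}
    (I : set (set nat)) (y : nat -> X) (l : X) : Prop :=
  forall eps : R, 0 < eps -> I [set n | eps < `|y n - l|].

(* A series sum_n x_n is I-convergent: its sequence of partial sums
   (s_1, s_2, ...) -- i.e. at index n the sum of the first n+1 terms -- is
   I-convergent to some element. *)
Definition I_cvg_series {R : realType} {X : normedModType R}
    (I : set (set nat)) (x : nat -> X) : Prop :=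
  exists l : X, I_cvg_to I (fun n => series x n.+1) l.

Definition uncond_cvg {R : realType} {X : normedModType R} (x : nat -> X) : Prop :=
  forall p : nat -> nat, bijective p -> cvg (series (x \o p) @ \oo).

(* {-1,1}^N is represented by the Cantor space bool^N via true |-> 1, false |-> -1
   (a homeomorphism). *)
Definition sgn_of {R : realType} (b : bool) : R := if b then 1 else -1.

Definition B_set {R : realType} {X : normedModType R}
    (I : set (set nat)) (x : nat -> X) : set cantor_space :=
  [set t | I_cvg_series I (fun n => sgn_of (R:=R) (t n) *: x n)].

(* An ideal with the Baire property is meager, and a meager hereditary family
   admits Talagrand's block decomposition: intervals [a k, a k.+1) such that
   each member of the ideal misses a point of all but finitely many blocks.
   If the series is not unconditionally convergent, then beyond every index
   some finite subsum has norm > d; signs realizing it, followed by greedily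
   chosen signs, keep all later partial sums d-far from any prescribed point.
   So for each n the sign sequences whose partial sums come back d-close to
   S_(n+1) in every block k >= n form a nowhere dense set.  If t is in B(I)
   with I-limit l, then {i | d/2 < |S_(i+1) - l|} is in I, and any n outside
   it and beyond the blocks it contains puts t in the n-th of these sets. *)

From HB Require Import structures.
From mathcomp Require Import all_boot all_order all_algebra.
From mathcomp Require Import all_classical all_reals.
From mathcomp Require Import topology normedtype sequences cantor.
From mathcomp Require Import zify lra.
Import numFieldNormedType.Exports.
Import Order.TTheory GRing.Theory Num.Theory.
Set Implicit Arguments. Unset Strict Implicit. Unset Printing Implicit Defensive.
Local Open Scope classical_set_scope.
Local Open Scope ring_scope.

Definition agree n (f g : cantor_space) := forall i, (i < n)%N -> f i = g i.

Lemma agree_trans n f g h : agree n f g -> agree n g h -> agree n f h.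
Proof. by move=> fg gh i ilt; rewrite fg ?gh. Qed.

Lemma agree_le m n f g : (m <= n)%N -> agree n f g -> agree m f g.
Proof. by move=> mn fg i im; apply: fg; apply: leq_trans mn. Qed.

Lemma agree_nbhs n (f : cantor_space) : nbhs f (agree n f).
Proof.
elim: n => [|n IHn]; first by apply: filterS filterT => g _ i.
have fn : nbhs f [set g : cantor_space | f n = g n].
  apply: (@proj_continuous nat (fun=> bool) n f [set b | f n = b]).
  by rewrite nbhs_principalE; apply/principal_filterP.
apply: filterS (filterI IHn fn) => g [fg fgn] i; rewrite ltnS leq_eqVlt.
by case/orP => [/eqP -> //|]; apply: fg.
Qed.

Lemma nbhs_agreeP (f : cantor_space) (U : set cantor_space) :
  nbhs f U <-> exists n, agree n f `<=` U.
Proof.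
split=> [Uf|[n fnU]]; last exact: filterS fnU (agree_nbhs n f).
apply: contrapT => noU.
have /choice[g gP] : forall n, exists g, agree n f g /\ ~ U g.
  move=> n; apply: contrapT => nog; apply: noU; exists n => g fg.
  by apply: contrapT => Ug; apply: nog; exists g.
have g_cvg : g @ \oo --> f.
  apply/cvg_sup => i V [W] [[Z] _ <-] Zfi ZV.
  apply: filterS ZV _; exists i.+1 => // n /= ni.
  by rewrite -(proj1 (gP n)).
have [N _ gNU] := g_cvg U Uf.
exact: (proj2 (gP N)) (gNU N (leqnn N)).
Qed.

Lemma nowhere_denseP (E : set cantor_space) : nowhere_dense E <->
  forall n f, exists m g, [/\ (n <= m)%N, agree n f g & agree m g `<=` ~` E].
Proof.
split=> [ndE n f|avoidE].
  have [g [fg clEg]] : exists g, agree n f g /\ ~ closure E g.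
    apply: contrapT => allE.
    have : interior (closure E) f.
      apply: filterS (agree_nbhs n f) => g fg; apply: contrapT => clEg.
      by apply: allE; exists g.
    by rewrite ndE.
  have [B gB EB] : exists2 B, nbhs g B & ~ (E `&` B !=set0).
    apply: contrapT => meetE; apply: clEg => B gB.
    by apply: contrapT => EB; apply: meetE; exists B.
  have [m gmB] := (nbhs_agreeP g B).1 gB.
  exists (maxn n m), g; split => //; first exact: leq_maxl.
  move=> h gh Eh; apply: EB; exists h; split => //; apply: gmB.
  exact: agree_le (leq_maxr n m) gh.
rewrite /nowhere_dense -subset0 => f /nbhs_agreeP[n fnE].
have [m [g [_ fg gE]]] := avoidE n f.
have [h [Eh gh]] := fnE g fg _ (agree_nbhs m g).
exact: gE h gh Eh.
Qed.

Definition block (a : nat -> nat) k i := (a k <= i < a k.+1)%N.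

Lemma leq_incr (a : nat -> nat) : {homo a : m n / (m < n)%N} ->
  forall k, (k <= a k)%N.
Proof.
by move=> a_incr; elim=> // k IHk; apply: leq_ltn_trans IHk (a_incr _ _ _).
Qed.

Section AvoidingBlocks.
Variable F : nat -> set cantor_space.
Hypothesis ndF : forall j, nowhere_dense (F j).

Lemma avoid_finitely_many (T : eqType) (s : seq T) (f : T -> cantor_space)
    (j : T -> nat) n :
  exists b (r : cantor_space), (n < b)%N /\ forall t, t \in s -> forall h,
    agree n (f t) h -> (forall i, (n <= i < b)%N -> h i = r i) -> ~ F (j t) h.
Proof.
elim: s => [|t s [b [r [nb avoid_s]]]].
  by exists n.+1, (fun=> false); split => // t; rewrite in_nil.
pose q : cantor_space := fun i => if (i < n)%N then f t i else r i.
have [m [g [bm qg gF]]] := (nowhere_denseP (F (j t))).1 (ndF (j t)) b q.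
exists m, g; split; first exact: leq_trans nb bm.
move=> t'; rewrite in_cons => /orP[/eqP -> | t's] h th gh.
  apply: gF => i im; case: (ltnP i n) => [ilt|nle].
    by rewrite -qg ?(leq_trans ilt (ltnW nb)) // /q ilt th.
  by rewrite gh // nle.
apply: (avoid_s t' t's h th) => i /andP[ni ib].
by rewrite gh ?ni ?(leq_trans ib bm) // -qg // /q ltnNge ni.
Qed.

Lemma avoiding_block k n : exists b (r : cantor_space), (n < b)%N /\
  forall h, (forall i, (n <= i < b)%N -> h i = r i) ->
    forall j, (j <= k)%N -> ~ F j h.
Proof.
pose T : finType := ({ffun 'I_n -> bool} * 'I_k.+1)%type.
pose f (t : T) : cantor_space := fun i => odflt false (omap t.1 (insub i)).
have [b [r [nb avoid]]] := avoid_finitely_many (enum T) f (fun t => val t.2) n.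
exists b, r; split => // h hr j jk.
apply: (avoid ([ffun i => h (val i)], Ordinal (jk : (j < k.+1)%N))) hr.
  by rewrite mem_enum.
by move=> i ilt; rewrite /f /= insubT /= ffunE.
Qed.

Lemma avoiding_blocks : exists (a : nat -> nat) (r : nat -> cantor_space),
  {homo a : m n / (m < n)%N} /\
  forall k h, (forall i, block a k i -> h i = r k i) ->
    forall j, (j <= k)%N -> ~ F j h.
Proof.
have /choice[next nextP] : forall kn : nat * nat,
    exists br : nat * cantor_space, (kn.2 < br.1)%N /\
    forall h, (forall i, (kn.2 <= i < br.1)%N -> h i = br.2 i) ->
      forall j, (j <= kn.1)%N -> ~ F j h.
  by move=> [k n]; have [b [r avoid]] := avoiding_block k n; exists (b, r).
pose fix a k := if k is k'.+1 then (next (k', a k')).1 else 0%N.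
exists a, (fun k => (next (k, a k)).2); split => [|k].
  by apply: homo_ltn ltn_trans _ => k; exact: (nextP (k, a k)).1.
exact: (nextP (k, a k)).2.
Qed.

End AvoidingBlocks.

Section Splice.
Variables (a : nat -> nat) (r : nat -> cantor_space).
Hypothesis a_incr : {homo a : m n / (m < n)%N}.
Implicit Types (Q : pred nat) (d : cantor_space).

(* Searching ['I_i.+1] suffices: a block [k] containing [i] has
   [k <= a k <= i]. *)
Definition splice (Q : pred nat) (d : cantor_space) (i : nat) : bool :=
  if [pick k : 'I_i.+1 | Q k && block a k i] is Some k then r k i else d i.

Lemma block_inj k k' i : block a k i -> block a k' i -> k = k'.
Proof.
move=> /andP[aki ik] /andP[ak'i ik']; apply/eqP; rewrite eqn_leq.
rewrite leqNgt -(leq_mono a_incr) -ltnNge (leq_ltn_trans aki ik') /=.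
by rewrite leqNgt -(leq_mono a_incr) -ltnNge (leq_ltn_trans ak'i ik).
Qed.

Lemma splice_in Q d k i : Q k -> block a k i -> splice Q d i = r k i.
Proof.
move=> Qk aki; rewrite /splice; case: pickP => [k' /andP[_ ak'i]|noQ].
  by rewrite (block_inj ak'i aki).
have ki : (k < i.+1)%N.
  by rewrite ltnS (leq_trans (leq_incr a_incr k)) //; case/andP: aki.
by have := noQ (Ordinal ki); rewrite /= Qk aki.
Qed.

Lemma splice_out Q d i : (forall k, Q k -> ~~ block a k i) -> splice Q d i = d i.
Proof.
move=> noQ; rewrite /splice; case: pickP => // k /andP[Qk aki].
by have := noQ k Qk; rewrite aki.
Qed.

Lemma agree_splice n Q d :
  (forall k, Q k -> (n <= a k)%N) -> agree n d (splice Q d).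
Proof.
move=> Qn i ilt; rewrite splice_out // => k /Qn nak.
by rewrite negb_and -ltnNge (leq_trans ilt nak).
Qed.

Lemma splice_disjoint_or Q Q' d i : (forall k, Q k -> ~~ Q' k) ->
  d i -> splice Q d i || splice Q' d i.
Proof.
move=> QQ' di; have [[k Qk aki]|noQ] := pselect (exists2 k, Q k & block a k i).
  rewrite [splice Q' d i]splice_out ?di ?orbT // => k' Q'k'.
  by apply: contraNN (QQ' _ Qk) => ak'i; rewrite (block_inj aki ak'i).
rewrite [splice Q d i]splice_out ?di // => k Qk.
by apply/negP => aki; apply: noQ; exists k.
Qed.

Variable F : nat -> set cantor_space.
Hypothesis r_avoids : forall k h, (forall i, block a k i -> h i = r k i) ->
  forall j, (j <= k)%N -> ~ F j h.

Lemma splice_avoids Q d : (forall j, exists2 k, Q k & (j <= k)%N) ->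
  forall j, ~ F j (splice Q d).
Proof.
move=> Qinf j; have [k Qk jk] := Qinf j.
by apply: r_avoids jk => i; apply: splice_in.
Qed.

End Splice.

Lemma ideal_meager I : is_ideal I -> baire_property (ideal_in_cantor I) ->
  meager (ideal_in_cantor I).
Proof.
move=> [IU _ IT Ifin] [U [oU [F [ndF IUF]]]].
have [a [r [a_incr r_avoids]]] := avoiding_blocks ndF.
suff U0 : U = set0.
  by exists F; split => // A IA; apply: IUF; left; rewrite U0 setD0.
(* A cylinder inside U would contain two splices, along the odd resp. even
   blocks beyond it, that avoid the meager set and so lie in I; together with
   an initial segment they cover nat. *)
rewrite -subset0 => f Uf.
have [L fLU] := (nbhs_agreeP f U).1 (open_nbhs_nbhs (conj oU Uf)).
pose d : cantor_space := fun i => if (i < L)%N then f i else true.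
pose Q (b : bool) : pred nat := fun k => (odd k == b) && (L <= a k)%N.
have Q_inf b j : exists2 k, Q b k & (j <= k)%N.
  have jLk : (j + L <= b + (j + L).*2)%N by rewrite -addnn; lia.
  exists (b + (j + L).*2)%N; last exact: leq_trans (leq_addr L j) jLk.
  rewrite /Q oddD odd_double oddb addbF eqxx /=.
  exact: leq_trans (leq_trans (leq_addl j L) jLk) (leq_incr a_incr _).
have spliceQ_in_I b : I [set i | splice a r (Q b) d i].
  apply: contrapT => notI.
  have fQ : agree L f (splice a r (Q b) d).
    apply: (agree_trans (g := d)) => [i iL|]; first by rewrite /d iL.
    by apply: agree_splice => k /andP[].
  have [j _] := IUF (splice a r (Q b) d) (or_intror (conj (fLU _ fQ) notI)).
  exact: (splice_avoids a_incr r_avoids (Q_inf b)).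
apply: IT; rewrite [setT](_ : _ = [set i | splice a r (Q true) d i]
    `|` [set i | splice a r (Q false) d i] `|` `I_L).
  apply: IU (IU _ _ (spliceQ_in_I true) (spliceQ_in_I false)) _.
  exact: Ifin (finite_II L).
apply/seteqP; split => // i _; case: (ltnP i L) => iL; [by right | left].
apply/orP/(splice_disjoint_or r a_incr); last by rewrite /d ltnNge iL.
by move=> k; rewrite /Q => /andP[/eqP -> _].
Qed.

Lemma meager_ideal_blocks I : (forall A B, B `<=` A -> I A -> I B) ->
  meager (ideal_in_cantor I) ->
  exists a : nat -> nat, {homo a : m n / (m < n)%N} /\
  forall A, I A -> exists K, forall k, (K <= k)%N -> exists2 i, block a k i & ~ A i.
Proof.
move=> Isub [F [ndF IF]]; have [a [r [a_incr r_avoids]]] := avoiding_blocks ndF.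
exists a; split => // A IA; apply: contrapT => noK.
pose Q : pred nat := fun k => `[< forall i, block a k i -> A i >].
have Q_inf j : exists2 k, Q k & (j <= k)%N.
  apply: contrapT => noQ; apply: noK; exists j => k jk.
  apply: contrapT => Ak; apply: noQ; exists k => //; apply/asboolP => i aki.
  by apply: contrapT => notA; apply: Ak; exists i.
have [j _] : (\bigcup_j F j) (splice a r Q (fun=> false)).
  apply/IF/(Isub _ _ _ IA) => i /=.
  have [[k Qk aki]|noQ] := pselect (exists2 k, Q k & block a k i).
    by move=> _; move/asboolP: Qk; apply.
  by rewrite splice_out // => k Qk; apply/negP => aki; apply: noQ; exists k.
exact: (splice_avoids a_incr r_avoids Q_inf).
Qed.

Lemma ideal_compl_unbounded I A : is_ideal I -> I A ->
  forall K, exists2 m, (K <= m)%N & ~ A m.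
Proof.
move=> [IU _ IT Ifin] IA K; apply: contrapT => noA; apply: IT.
rewrite [setT](_ : _ = A `|` `I_K); first exact: IU IA (Ifin _ (finite_II K)).
apply/seteqP; split => // i _; case: (ltnP i K) => [|Ki]; first by right.
by left; apply: contrapT => notA; apply: noA; exists i.
Qed.

Lemma big_nat_bij_window (V : nmodType) (F : nat -> V) (p q : nat -> nat)
    n1 n2 N M : cancel p q -> cancel q p ->
  (forall k, (n1 <= k < n2)%N -> (N <= p k < M)%N) ->
  \sum_(n1 <= k < n2) F (p k) = \sum_(N <= i < M | (n1 <= q i < n2)%N) F i.
Proof.
move=> pK qK pNM.
transitivity (\sum_(i <- map p (index_iota n1 n2)) F i); first by rewrite big_map.
rewrite -[RHS]big_filter; apply: perm_big; apply: uniq_perm.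
- by rewrite map_inj_uniq ?iota_uniq //; exact: can_inj pK.
- exact: filter_uniq (iota_uniq _ _).
move=> i; rewrite mem_filter mem_index_iota; apply/mapP/idP.
  by move=> [k + ->]; rewrite mem_index_iota pK => k12; rewrite k12 pNM.
move=> /andP[q12 _]; exists (q i); last by rewrite qK.
by rewrite mem_index_iota.
Qed.

Lemma subsums_cauchy_uncond_cvg (R : realType) (X : completeNormedModType R)
    (x : nat -> X) :
  (forall e : R, 0 < e -> exists N, forall M (b : pred nat),
    `|\sum_(N <= i < M | b i) x i| <= e) ->
  uncond_cvg x.
Proof.
move=> subsums p [q pK qK]; apply/cauchy_cvgP/cauchy_seriesP => e e0.
have [N subsumsN] := subsums (e / 2) (divr_gt0 e0 (ltr0Sn _ 1)).
pose M0 := (\max_(i < N) q i).+1.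
have p_ge k : (M0 <= k)%N -> (N <= p k)%N.
  move=> M0k; rewrite leqNgt; apply/negP => pkN.
  have := @leq_bigmax _ (fun i : 'I_N => q i) (Ordinal pkN).
  by rewrite /= pK => /(leq_ltn_trans)/(_ M0k); rewrite ltnn.
near=> n.
have M0n : (M0 <= n.1)%N.
  near: n; exists ([set k | (M0 <= k)%N], setT); last by move=> [? ?] [].
  by split; [exists M0 | exact: filterT].
have [n21|n12] := leqP n.2 n.1; first by rewrite big_geq // normr0.
pose M := (\max_(k < n.2) p k).+1.
rewrite (@big_nat_bij_window _ x p q _ _ N M) //; last first.
  move=> k /andP[n1k kn2]; rewrite p_ge ?(leq_trans M0n) //=.
  by rewrite ltnS (@leq_bigmax _ (fun k : 'I_n.2 => p k) (Ordinal kn2)).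
apply: le_lt_trans (subsumsN _ _) _.
by rewrite ltr_pdivrMr // ltr_pMr // ltr1n.
Unshelve. all: by end_near.
Qed.

Lemma norm_le_greedy (R : realType) (X : normedModType R) (v y : X) :
  `|v| <= `|v + sgn_of (`|v - y| <= `|v + y|) *: y|.
Proof.
have v2 : `|v| *+ 2 <= `|v + y| + `|v - y|.
  rewrite -normrMn (_ : v *+ 2 = (v + y) + (v - y)) ?ler_normD //.
  by rewrite addrACA subrr addr0 mulr2n.
rewrite mulr2n in v2; rewrite /sgn_of; case: ifP => [vy|/negbT].
  by rewrite scale1r; lra.
by rewrite scaleN1r -ltNge; lra.
Qed.

Section SignedSums.
Variables (R : realType) (X : normedModType R) (x : nat -> X).

Definition signed_sum (t : cantor_space) n :=
  series (fun i => sgn_of (R:=R) (t i) *: x i) n.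

Lemma signed_sum_agree n t t' : agree n t t' -> signed_sum t n = signed_sum t' n.
Proof.
by move=> tt'; apply: eq_big_nat => i /andP[_ ilt]; rewrite tt'.
Qed.

Lemma signed_sumS t n : signed_sum t n.+1 = signed_sum t n + sgn_of (t n) *: x n.
Proof. by rewrite /signed_sum /series /= big_nat_recr. Qed.

Lemma greedy_extension t M c : exists t', agree M t t' /\
  forall m, (M <= m)%N -> `|signed_sum t M - c| <= `|signed_sum t' m - c|.
Proof.
pose y k := x (M + k)%N.
pose sign v k := `|v - y k| <= `|v + y k|.
pose fix v k := if k is k'.+1 then v k' + sgn_of (sign (v k') k') *: y k'
  else signed_sum t M - c.
pose t' : cantor_space :=
  fun i => if (i < M)%N then t i else sign (v (i - M)%N) (i - M)%N.
have t'v k : signed_sum t' (M + k) - c = v k.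
  elim: k => [|k IHk].
    by rewrite addn0 (@signed_sum_agree M t' t) // => i iM; rewrite /t' iM.
  by rewrite addnS signed_sumS addrAC IHk /t' ltnNge leq_addr /= addKn.
have v_grow k : `|v 0| <= `|v k|.
  by elim: k => // k IHk; apply: le_trans IHk (norm_le_greedy _ _).
exists t'; split => [i iM|m Mm]; first by rewrite /t' iM.
by rewrite -(subnKC Mm) t'v; exact: v_grow.
Qed.

Variable d : R.
Hypothesis d_gt0 : 0 < d.
Hypothesis far_subsums :
  forall N, exists M (b : pred nat), d < `|\sum_(N <= i < M | b i) x i|.

Lemma far_extension L t c : exists M t',
  [/\ (L <= M)%N, agree L t t' & d < `|signed_sum t' M - c|].
Proof.
have [M [b db]] := far_subsums L.
have LM : (L <= M)%N.
  rewrite leqNgt; apply/negP => ML.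
  by move: db; rewrite big_geq ?(ltnW ML) // normr0 ltNge (ltW d_gt0).
pose t_ (s : bool) : cantor_space :=
  fun i => if (i < L)%N then t i else if b i then s else true.
(* The two sign choices on [b] differ by twice the far subsum, so one of them
   is d-far from [c]. *)
have t_diff : signed_sum (t_ true) M - signed_sum (t_ false) M =
    2 *: \sum_(L <= i < M | b i) x i.
  rewrite /signed_sum /series /= -sumrB (big_cat_nat (leq0n L) LM) /=.
  rewrite big_nat_cond big1 ?add0r; last first.
    by move=> i /andP[/andP[_ iL] _]; rewrite /t_ iL subrr.
  rewrite scaler_sumr [RHS]big_mkcond /=; apply: eq_big_nat => i /andP[Li _].
  rewrite /t_ ltnNge Li /=; case: (b i) => /=; last by rewrite subrr.
  by rewrite /sgn_of scale1r scaleN1r opprK scaler_nat mulr2n.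
have [s ds] : exists s, d < `|signed_sum (t_ s) M - c|.
  case: (ltP d `|signed_sum (t_ true) M - c|) => [dtrue|]; first by exists true.
  exists false; have := ler_normB (signed_sum (t_ true) M - c)
                                  (signed_sum (t_ false) M - c).
  rewrite opprB addrA subrK t_diff normrZ ger0_norm //; lra.
by exists M, (t_ s); split => // i iL; rewrite /t_ iL.
Qed.

Definition returning (a : nat -> nat) (e : R) n : set cantor_space :=
  [set t | forall k, (n <= k)%N ->
    exists2 i, block a k i & `|signed_sum t i.+1 - signed_sum t n.+1| <= e].

Lemma returning_nowhere_dense a n : {homo a : m n / (m < n)%N} ->
  nowhere_dense (returning a d n).
Proof.
move=> a_incr; apply/nowhere_denseP => p f.
set c := signed_sum f n.+1.
have [M [g0 [LM fg0 dg0]]] := far_extension (maxn p n.+1) f c.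
have [g [g0g g_far]] := greedy_extension g0 M c.
have fg : agree (maxn p n.+1) f g := agree_trans fg0 (agree_le LM g0g).
pose k := maxn n M.
exists (maxn p (a k.+1)), g; split; first exact: leq_maxl.
  exact: agree_le (leq_maxl p n.+1) fg.
move=> h gh /(_ k (leq_maxl n M))[i /andP[aki ik]].
have gh_a : agree (a k.+1) g h := agree_le (leq_maxr _ _) gh.
have Mi : (M <= i.+1)%N.
  exact: leq_trans (leq_maxr n M) (leq_trans (leq_incr a_incr k) (leqW aki)).
have fh : agree n.+1 f h.
  apply: agree_trans (agree_le (leq_maxr p n.+1) fg) (agree_le _ gh_a).
  by rewrite (leq_trans _ (leq_incr a_incr k.+1)) // ltnS leq_maxl.
rewrite -(signed_sum_agree (agree_le ik gh_a)) -(signed_sum_agree fh) -/c.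
have := g_far _ Mi; lra.
Qed.

End SignedSums.

Theorem theorem3p4 (R : realType) (X : completeNormedModType R)
    (x : nat -> X) (I : set (set nat)) :
  ~ uncond_cvg x ->
  is_ideal I ->
  baire_property (ideal_in_cantor I) ->
  meager (B_set I x).
Proof.
move=> not_uncond Iideal IBP.
have [d d_gt0 far_subsums] : exists2 d : R, 0 < d &
    forall N, exists M (b : pred nat), d < `|\sum_(N <= i < M | b i) x i|.
  apply: contrapT => no_d; apply/not_uncond/subsums_cauchy_uncond_cvg => e e0.
  apply: contrapT => no_N; apply: no_d; exists e => // N.
  apply: contrapT => small; apply: no_N; exists N => M b.
  by rewrite leNgt; apply/negP => eb; apply: small; exists M, b.
have [_ Isub _ _] := Iideal.
have [a [a_incr Iblocks]] := meager_ideal_blocks Isub (ideal_meager Iideal IBP).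
exists (returning x a d); split => [n|t [l tl]].
  exact: returning_nowhere_dense.
have I_far := tl (d / 2) (divr_gt0 d_gt0 (ltr0Sn _ 1)).
have [K Kblocks] := Iblocks _ I_far.
have [m Km lm] := ideal_compl_unbounded Iideal I_far K.
exists m => // k mk; have [i aki li] := Kblocks k (leq_trans Km mk).
exists i => //; have := ler_distD l (signed_sum x t i.+1) (signed_sum x t m.+1).
rewrite /= -/(signed_sum x t i.+1) -/(signed_sum x t m.+1) in li lm.
rewrite (distrC l); lra.
Qed.
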